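(* Let $\mathcal{L}$ be a propositional language, $\mathcal{L}_1$ an expansion of $\mathcal{L}$ with induced quantale embedding $i:\wp\Sigma_{\mathcal{L}}\to\wp\Sigma_{\mathcal{L}_1}$, and $(D,\vdash)$ a deductive system over $\mathcal{L}$ with associated nucleus $\gamma$ and $\wp\Sigma_{\mathcal{L}}$-module of theories $\mathrm{Th}$. Let $D_1$ be the domain of the same type as $D$ over $\mathcal{L}_1$. Then there exists a consequence relation $\vdash_1$ on $\wp D_1$ whose $\wp\Sigma_{\mathcal{L}_1}$-module of theories $\mathrm{Th}_1$ is isomorphic to $\wp\Sigma_{\mathcal{L}_1}\otimes_{\wp\Sigma_{\mathcal{L}}}\mathrm{Th}$.
   Context: A quantale is a complete lattice with a monoid product distributing over arbitrary joins; a left $Q$-module is a complete lattice with an associative unital action distributing over joins in each argument; a $Q$-module nucleus is a closure operator $\gamma$ with $a\gamma(u)\le\gamma(au)$, with image a $Q$-module under join $\gamma(\bigvee\cdot)$ and action $\gamma(au)$. For a language $\mathcal{L}$ and fixed denumerable $\mathrm{Var}$: $\mathit{Fm}_{\mathcal{L}}$ term algebra, $\Sigma_{\mathcal{L}}$ monoid of substitutions, $\wp\Sigma_{\mathcal{L}}$ quantale of subsets (union, elementwise composition, unit $\{\mathrm{id}\}$). A domain is formulas, equations $\mathit{Fm}_{\mathcal{L}}^2$ or sequents $\bigcup_{(m,n)\in T}\mathit{Fm}_{\mathcal{L}}^m\times\mathit{Fm}_{\mathcal{L}}^n$; ''same type'' means the same kind (and same $T$). $\wp D$ is a left $\wp\Sigma_{\mathcal{L}}$-module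 via $\Sigma\cdot\Phi=\{\sigma(\varphi)\}$. A (structural) consequence relation corresponds to the nucleus $\gamma(\Phi)=\{\psi:\Phi\vdash\psi\}$ on $\wp D$ and has module of theories $(\wp D)_\gamma$. An expansion $\mathcal{L}_1$ contains all connectives of $\mathcal{L}$ with the same arities; $i$ maps each substitution to the unique $\mathcal{L}_1$-substitution with the same values on $\mathrm{Var}$, making $\wp\Sigma_{\mathcal{L}_1}$ a right $\wp\Sigma_{\mathcal{L}}$-module. The tensor product $M_1\otimes_Q M_2$ (right module $M_1$, left module $M_2$) is the quotient of the free sup-lattice $\wp(M_1\times M_2)$ by the sup-lattice congruence generated by $(\{(\bigvee X,y)\},\bigcup_{x\in X}\{(x,y)\})$, $(\{(x,\bigvee Y)\},\bigcup_{y\in Y}\{(x,y)\})$, $(\{(xa,y)\},\{(x,ay)\})$, a left $\wp\Sigma_{\mathcal{L}_1}$-module via the first factor. *)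

From mathcomp Require Import all_boot.
From Stdlib Require Import FunctionalExtensionality PropExtensionality.
Set Implicit Arguments. Unset Strict Implicit. Unset Printing Implicit Defensive.

Definition pset (X : Type) := X -> Prop.

Record Lang := { con : Type; ar : con -> nat }.

Inductive Fm (L : Lang) : Type :=
| Var : nat -> Fm L
| App : forall c : con L, ('I_(ar c) -> Fm L) -> Fm L.
Arguments Var {L} _.

Definition Subst (L : Lang) := nat -> Fm L.

Fixpoint subst (L : Lang) (s : Subst L) (t : Fm L) : Fm L :=
  match t with
  | Var v => s v
  | App c f => @App L c (fun i => subst s (f i))
  end.

Definition scomp (L : Lang) (s t : Subst L) : Subst L := fun v => subst s (t v).

(** The quantale of subsets of substitutions: union, elementwise composition,
    unit {id}. *)
Definition qmul (L : Lang) (A B : pset (Subst L)) : pset (Subst L) :=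
  fun u => exists s t, A s /\ B t /\ u = scomp s t.
Definition qunion (L : Lang) (S : pset (pset (Subst L))) : pset (Subst L) :=
  fun s => exists A, S A /\ A s.

Record expansion (L L1 : Lang) := {
  emb : con L -> con L1;
  emb_inj : injective emb;
  emb_ar : forall c, ar (emb c) = ar c }.

Fixpoint embF (L L1 : Lang) (E : expansion L L1) (t : Fm L) : Fm L1 :=
  match t with
  | Var v => Var v
  | App c f => @App L1 (emb E c) (fun i => embF E (f (cast_ord (emb_ar E c) i)))
  end.

Definition iSub (L L1 : Lang) (E : expansion L L1) (s : Subst L) : Subst L1 :=
  fun v => embF E (s v).
Definition iset (L L1 : Lang) (E : expansion L L1) (a : pset (Subst L))
  : pset (Subst L1) := fun u => exists s, a s /\ u = iSub E s.

(** * Domains: formulas, equations, sequents of types in T *)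
Inductive DomKind := DFm | DEq | DSeq of (nat -> nat -> Prop).

Definition Dom (k : DomKind) (L : Lang) : Type :=
  match k with
  | DFm => Fm L
  | DEq => (Fm L * Fm L)%type
  | DSeq T => {p : seq (Fm L) * seq (Fm L) | T (size p.1) (size p.2)}
  end.

Lemma seq_subst_ok (L : Lang) (T : nat -> nat -> Prop) (s : Subst L)
  (p : seq (Fm L) * seq (Fm L)) :
  T (size p.1) (size p.2) ->
  T (size (map (subst s) p.1)) (size (map (subst s) p.2)).
Proof. by rewrite !size_map. Qed.

Definition dsubst (k : DomKind) (L : Lang) (s : Subst L) : Dom k L -> Dom k L :=
  match k return Dom k L -> Dom k L with
  | DFm => fun t => subst s t
  | DEq => fun e => (subst s e.1, subst s e.2)
  | DSeq T => fun x =>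
      exist (fun p : seq (Fm L) * seq (Fm L) => T (size p.1) (size p.2))
            (map (subst s) (sval x).1, map (subst s) (sval x).2)
            (@seq_subst_ok L T s (sval x) (svalP x))
  end.

Definition sact (k : DomKind) (L : Lang) (A : pset (Subst L)) (P : pset (Dom k L))
  : pset (Dom k L) := fun d => exists s x, A s /\ P x /\ d = dsubst s x.

Record conseq (k : DomKind) (L : Lang)
    (vd : pset (Dom k L) -> Dom k L -> Prop) : Prop := {
  cq_refl : forall P x, P x -> vd P x;
  cq_mono : forall P Q x, (forall y, P y -> Q y) -> vd P x -> vd Q x;
  cq_cut : forall P Q x, (forall y, Q y -> vd P y) -> vd Q x -> vd P x;
  cq_struct : forall s P x, vd P x -> vd (sact (fun t => t = s) P) (dsubst s x) }.

Definition gamma (k : DomKind) (L : Lang) (vd : pset (Dom k L) -> Dom k L -> Prop)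
  (P : pset (Dom k L)) : pset (Dom k L) := fun x => vd P x.

Definition theory (k : DomKind) (L : Lang) (vd : pset (Dom k L) -> Dom k L -> Prop)
  (P : pset (Dom k L)) : Prop := gamma vd P = P.

Record SupAct (Q : Type) := {
  car :> Type;
  jn : pset car -> car;
  act : Q -> car -> car }.

Definition module_iso (Q : Type) (M N : SupAct Q) : Prop :=
  exists f : car M -> car N,
    bijective f /\
    (forall S : pset (car M), f (jn S) = jn (fun y => exists x, S x /\ y = f x)) /\
    (forall a x, f (act a x) = act a (f x)).

Section Theories.
Variables (k : DomKind) (L : Lang) (vd : pset (Dom k L) -> Dom k L -> Prop).
Hypothesis H : conseq vd.

Lemma gamma_theory (P : pset (Dom k L)) : theory vd (gamma vd P).
Proof.
rewrite /theory /gamma.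
apply: FunctionalExtensionality.functional_extensionality => x.
apply: PropExtensionality.propositional_extensionality; split => Hx.
- by apply: (cq_cut H) Hx.
- by apply: (cq_refl H).
Qed.

Definition ThCar := {P : pset (Dom k L) | theory vd P}.
Definition th_jn (S : pset ThCar) : ThCar :=
  exist _ (gamma vd (fun x => exists P : ThCar, S P /\ sval P x)) (gamma_theory _).
Definition th_act (A : pset (Subst L)) (P : ThCar) : ThCar :=
  exist _ (gamma vd (sact A (sval P))) (gamma_theory _).

Definition ThMod : SupAct (pset (Subst L)) :=
  {| car := ThCar; jn := th_jn; act := th_act |}.
End Theories.

Section Tensor.
Variables (L L1 : Lang) (E : expansion L L1) (k : DomKind)
  (vd : pset (Dom k L) -> Dom k L -> Prop) (H : conseq vd).

Let M2 := ThMod H.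
Definition TX := (pset (Subst L1) * car M2)%type.

(** generating relations on the free sup-lattice pset TX *)
Definition tens_gen (A B : pset TX) : Prop :=
  (exists (Xs : pset (pset (Subst L1))) (y : car M2),
      A = (fun p => p = (qunion Xs, y)) /\ B = (fun p => Xs p.1 /\ p.2 = y))
  \/ (exists (x : pset (Subst L1)) (Ys : pset (car M2)),
      A = (fun p => p = (x, jn Ys)) /\ B = (fun p => p.1 = x /\ Ys p.2))
  \/ (exists (x : pset (Subst L1)) (a : pset (Subst L)) (y : car M2),
      A = (fun p => p = (qmul x (iset E a), y)) /\ B = (fun p => p = (x, act a y))).

Definition supcong (R : pset TX -> pset TX -> Prop) : Prop :=
  (forall A, R A A) /\ (forall A B, R A B -> R B A) /\
  (forall A B C, R A B -> R B C -> R A C) /\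
  (forall (I : Type) (F G : I -> pset TX), (forall i, R (F i) (G i)) ->
     R (fun p => exists i, F i p) (fun p => exists i, G i p)).

Definition tens_cong (A B : pset TX) : Prop :=
  forall R, supcong R -> (forall A B, tens_gen A B -> R A B) -> R A B.

Definition TCar := {C : pset (pset TX) | exists A, C = tens_cong A}.
Definition tcls (A : pset TX) : TCar := exist _ (tens_cong A) (ex_intro _ A erefl).

Definition t_jn (S : pset TCar) : TCar :=
  tcls (fun p => exists C A, S C /\ sval C A /\ A p).
Definition t_act (a : pset (Subst L1)) (C : TCar) : TCar :=
  tcls (fun p => exists A x y, sval C A /\ A (x, y) /\ p = (qmul a x, y)).

Definition TensorMod : SupAct (pset (Subst L1)) :=
  {| car := TCar; jn := t_jn; act := t_act |}.
End Tensor.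

From mathcomp Require Import all_boot.
From Stdlib Require Import FunctionalExtensionality PropExtensionality ProofIrrelevance.
Set Implicit Arguments. Unset Strict Implicit. Unset Printing Implicit Defensive.

(** Every [x] in [D1] is an instance [s(i d)] of the image of some [d] in [D]; call
    [{s} ⊗ γ{d}] a pure tensor presenting [x].  Define [P ⊢1 x] to hold when every
    pure tensor presenting [x] lies below the join of the pure tensors presenting
    members of [P].  The balancing relation [{s}·i(t) ⊗ y = {s} ⊗ t·y] makes all pure
    tensors presenting the same [x] equal: both presentations factor through the
    generic element of the shape of [x] (distinct variables in place of its formulas),
    and two substitutions agreeing on those variables are reconciled by interleaving
    them into a single one.  Since every tensor is a join of pure tensors, sending a
    theory to the join of the pure tensors presenting its members is a bijection onto
    the tensor product, with inverse [C ↦ {x | every presentation of x lies below C}];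
    it preserves joins and, by balancing again, the action of [℘Σ_L1]. *)

Lemma pset_ext (X : Type) (P Q : pset X) : (forall x, P x <-> Q x) -> P = Q.
Proof.
move=> PQ; apply: functional_extensionality => x.
exact: propositional_extensionality.
Qed.

Lemma sval_inj (A : Type) (P : A -> Prop) (x y : {a | P a}) : sval x = sval y -> x = y.
Proof. by apply: eq_sig_hprop => a; apply: proof_irrelevance. Qed.

Definition sing (X : Type) (x : X) : pset X := fun y => y = x.

Section Formulas.
Variable L : Lang.

Fixpoint Fm_nested_ind (P : Fm L -> Prop) (PV : forall v, P (Var v))
    (PA : forall c f, (forall i, P (f i)) -> P (App f)) (t : Fm L) : P t :=
  match t with
  | Var v => PV v
  | App c f => PA c f (fun i => Fm_nested_ind PV PA (f i))
  end.

Lemma subst_scomp (s t : Subst L) (x : Fm L) :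
  subst (scomp s t) x = subst s (subst t x).
Proof.
elim/Fm_nested_ind: x => [//|c f IH] /=.
by congr App; apply: functional_extensionality.
Qed.

Lemma scompA (s t u : Subst L) : scomp s (scomp t u) = scomp (scomp s t) u.
Proof. by apply: functional_extensionality => v; rewrite /scomp subst_scomp. Qed.

End Formulas.

Section Quantale.
Variable L : Lang.

Lemma qmulA (a b c : pset (Subst L)) : qmul a (qmul b c) = qmul (qmul a b) c.
Proof.
apply: pset_ext => u; split.
- case=> s [_ [as_ [[t [v [bt [cv ->]]]] ->]]].
  by exists (scomp s t), v; split; [exists s, t|split => //; rewrite scompA].
- case=> _ [v [[s [t [as_ [bt ->]]]] [cv ->]]].
  by exists s, (scomp t v); split => //; split; [exists t, v|rewrite scompA].
Qed.

Lemma qmul_sing (s t : Subst L) : qmul (sing s) (sing t) = sing (scomp s t).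
Proof.
apply: pset_ext => u; split; first by case=> _ [_ [-> [-> ->]]].
by move=> ->; exists s, t.
Qed.

Lemma iset_sing L1 (E : expansion L L1) (t : Subst L) : iset E (sing t) = sing (iSub E t).
Proof.
apply: pset_ext => u; split; first by case=> _ [-> ->].
by move=> ->; exists t.
Qed.

End Quantale.

Lemma sizes_transport (T : nat -> nat -> Prop) (A B : Type)
    (a1 a2 : seq A) (b1 b2 : seq B) :
  size b1 = size a1 -> size b2 = size a2 ->
  T (size a1) (size a2) -> T (size b1) (size b2).
Proof. by move=> -> ->. Qed.

Section DomainOps.
Variable k : DomKind.

Definition dmap (X Y : Lang) (f : Fm X -> Fm Y) : Dom k X -> Dom k Y :=
  match k return Dom k X -> Dom k Y with
  | DFm => f
  | DEq => fun e => (f e.1, f e.2)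
  | DSeq T => fun x =>
      exist (fun p : seq (Fm Y) * seq (Fm Y) => T (size p.1) (size p.2))
            (map f (sval x).1, map f (sval x).2)
            (sizes_transport (size_map _ _) (size_map _ _) (svalP x))
  end.

Definition dforms (X : Lang) : Dom k X -> seq (Fm X) :=
  match k return Dom k X -> seq (Fm X) with
  | DFm => fun t => [:: t]
  | DEq => fun e => [:: e.1; e.2]
  | DSeq T => fun x => (sval x).1 ++ (sval x).2
  end.

(* [d] with its formulas replaced by the distinct variables [0, 1, ...]. *)
Definition dgeneric (X Y : Lang) : Dom k X -> Dom k Y :=
  match k return Dom k X -> Dom k Y with
  | DFm => fun _ => Var 0
  | DEq => fun _ => (Var 0, Var 1)
  | DSeq T => fun x =>
      let n1 := size (sval x).1 in let n2 := size (sval x).2 in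
      exist (fun p : seq (Fm Y) * seq (Fm Y) => T (size p.1) (size p.2))
            (map Var (iota 0 n1), map Var (iota n1 n2))
            (sizes_transport (etrans (size_map _ _) (size_iota _ _))
                             (etrans (size_map _ _) (size_iota _ _)) (svalP x))
  end.

Definition subst_of_seq (X : Lang) (l : seq (Fm X)) : Subst X := nth (Var 0) l.

Definition vars_below (X : Lang) (n : nat) (d : Dom k X) : Prop :=
  forall r r' : Subst X, (forall v, v < n -> r v = r' v) -> dsubst r d = dsubst r' d.

End DomainOps.

Section DomainLemmas.
Variable k : DomKind.

Lemma dsubst_dmap (X : Lang) (s : Subst X) (d : Dom k X) :
  dsubst s d = dmap (subst s) d.
Proof. by case: k d => [||T] d; last apply: sval_inj. Qed.

Lemma dmap_comp (X Y Z : Lang) (f : Fm Y -> Fm Z) (g : Fm X -> Fm Y) (d : Dom k X) :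
  dmap f (dmap g d) = dmap (f \o g) d.
Proof. by case: k d => [||T] d; last (apply: sval_inj; rewrite /= -!map_comp). Qed.

Lemma dsubst_scomp (X : Lang) (s t : Subst X) (d : Dom k X) :
  dsubst (scomp s t) d = dsubst s (dsubst t d).
Proof.
rewrite !dsubst_dmap dmap_comp; congr dmap.
by apply: functional_extensionality => x; rewrite subst_scomp.
Qed.

Lemma dforms_dmap (X Y : Lang) (f : Fm X -> Fm Y) (d : Dom k X) :
  dforms (dmap f d) = map f (dforms d).
Proof. by case: k d => [||T] d //=; rewrite map_cat. Qed.

Lemma dgeneric_dmap (X Y Z : Lang) (f : Fm X -> Fm Y) (d : Dom k X) :
  dgeneric Z (dmap f d) = dgeneric Z d.
Proof. by case: k d => [||T] d; last (apply: sval_inj; rewrite /= !size_map). Qed.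

Lemma dmap_dgeneric (X Y Z : Lang) (f : Fm Y -> Fm Z) (d : Dom k X) :
  (forall v, f (Var v) = Var v) -> dmap f (dgeneric Y d) = dgeneric Z d.
Proof.
move=> fV; case: k d => [||T] d /=; rewrite ?fV //.
by apply: sval_inj; rewrite /= -!map_comp; congr pair; apply: eq_map.
Qed.

Lemma dsubst_dgeneric (X : Lang) (d : Dom k X) :
  dsubst (subst_of_seq (dforms d)) (dgeneric X d) = d.
Proof.
case: k d => [|[a b]|T [[l1 l2] p]] //; apply: sval_inj => /=.
rewrite -!map_comp /subst_of_seq map_nth_iota0 ?size_cat ?leq_addr //.
rewrite map_nth_iota ?size_cat ?addKn // take_size_cat //.
by rewrite drop_size_cat // take_size.
Qed.

Lemma dgeneric_vars_below (X Y : Lang) (d : Dom k X) :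
  vars_below (size (dforms d)) (dgeneric Y d).
Proof.
case: k d => [d|d|T [[l1 l2] p]] r r' rr' /=; rewrite ?rr' //.
apply: sval_inj; move: rr'; rewrite /= size_cat -!map_comp => rr'.
congr pair; apply/eq_in_map => v; rewrite mem_iota => /andP [_ vlt]; apply: rr' => //.
by apply: leq_trans vlt _; rewrite add0n leq_addr.
Qed.

End DomainLemmas.

Section Theories.
Variables (k : DomKind) (L : Lang) (vd : pset (Dom k L) -> Dom k L -> Prop).
Hypothesis H : conseq vd.

Definition principal (d : Dom k L) : ThCar vd :=
  exist _ (gamma vd (sing d)) (gamma_theory H _).

Lemma th_ext (y z : ThCar vd) : (forall x, sval y x <-> sval z x) -> y = z.
Proof. by move=> yz; apply: sval_inj; apply: pset_ext. Qed.

Lemma th_closed (y : ThCar vd) P x : (forall u, P u -> sval y u) -> vd P x -> sval y x.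
Proof.
case: y => y /= th_y Py Px; rewrite -th_y /gamma.
by apply: (cq_cut H) Px => u /Py; apply: (cq_refl H).
Qed.

Lemma principal_sub (y : ThCar vd) d :
  sval y d -> forall x, sval (principal d) x -> sval y x.
Proof. by move=> yd x; apply: th_closed => u ->. Qed.

Lemma th_act_principal (t : Subst L) (d : Dom k L) :
  th_act H (sing t) (principal d) = principal (dsubst t d).
Proof.
apply: th_ext => x /=; rewrite /gamma; split => Px.
- apply: (cq_cut H) Px => _ [_ [w [-> [dw ->]]]].
  by apply: (cq_mono H) (cq_struct H t dw) => _ [_ [_ [-> [-> ->]]]].
- apply: (cq_cut H) Px => _ ->; apply: (cq_refl H).
  by exists t, d; do !split; apply: (cq_refl H).
Qed.

Lemma th_jn_principal (y : ThCar vd) :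
  y = th_jn H (fun z => exists2 d, sval y d & z = principal d).
Proof.
apply: th_ext => x /=; rewrite /gamma; split => yx.
- apply: (cq_refl H); exists (principal x); split; first by exists x.
  exact: (cq_refl H).
- apply: th_closed yx => u [_ [[d yd ->]]]; exact: principal_sub.
Qed.

End Theories.

Section ScalarExtension.
Variables (L L1 : Lang) (E : expansion L L1) (k : DomKind)
  (vd : pset (Dom k L) -> Dom k L -> Prop) (H : conseq vd).

Local Notation TX := (TX L1 H).
Local Notation tcong := (@tens_cong L L1 E k vd H).

Definition psetU (A B : pset TX) : pset TX := fun p => A p \/ B p.
Definition pbigcup (I : Type) (F : I -> pset TX) : pset TX := fun p => exists i, F i p.

(* The order of the quotient sup-lattice, pulled back to subsets of [TX]. *)
Definition tleq (A B : pset TX) : Prop := tcong (psetU A B) B.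

Lemma tens_cong_supcong : supcong tcong.
Proof.
do ![split].
- by move=> A R [refl _] _; apply: refl.
- move=> A B AB R cR gen; case: (cR) => _ [sym _].
  exact/sym/(AB R cR gen).
- move=> A B C AB BC R cR gen; case: (cR) => _ [_ [trans _]].
  exact: trans (AB R cR gen) (BC R cR gen).
- move=> I F G FG R cR gen; case: (cR) => _ [_ [_ U]].
  by apply: U => i; apply: FG.
Qed.

Lemma tcong_refl A : tcong A A.
Proof. by case: tens_cong_supcong. Qed.

Lemma tcong_sym A B : tcong A B -> tcong B A.
Proof. by case: tens_cong_supcong => _ [sym _]; apply: sym. Qed.

Lemma tcong_trans A B C : tcong A B -> tcong B C -> tcong A C.
Proof. by case: tens_cong_supcong => _ [_ [trans _]]; apply: trans. Qed.

Lemma tcong_pbigcup I (F G : I -> pset TX) :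
  (forall i, tcong (F i) (G i)) -> tcong (pbigcup F) (pbigcup G).
Proof. by case: tens_cong_supcong => _ [_ [_ U]]; apply: U. Qed.

Lemma tcong_gen A B : tens_gen E A B -> tcong A B.
Proof. by move=> AB R _; apply. Qed.

Lemma psetU_pbigcup A B : psetU A B = pbigcup (fun b : bool => if b then A else B).
Proof.
apply: pset_ext => p; split; first by case=> ?; [exists true|exists false].
by case=> -[] ?; [left|right].
Qed.

Lemma tcong_psetU A A' B B' : tcong A A' -> tcong B B' -> tcong (psetU A B) (psetU A' B').
Proof. by move=> AA' BB'; rewrite !psetU_pbigcup; apply: tcong_pbigcup => -[]. Qed.

Lemma subset_tleq A B : (forall p, A p -> B p) -> tleq A B.
Proof.
move=> AB; rewrite /tleq (_ : psetU A B = B); first exact: tcong_refl.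
by apply: pset_ext => p; split => [[/AB|]|]; [| |right].
Qed.

Lemma tleq_refl A : tleq A A.
Proof. exact: subset_tleq. Qed.

Lemma mem_tleq p A : A p -> tleq (sing p) A.
Proof. by move=> Ap; apply: subset_tleq => q ->. Qed.

Lemma tcong_tleq A B : tcong A B -> tleq A B.
Proof. by move=> AB; apply: tcong_trans (tcong_psetU AB (tcong_refl B)) (tleq_refl B). Qed.

Lemma tleq_trans A B C : tleq A B -> tleq B C -> tleq A C.
Proof.
move=> AB BC; have ABC : psetU A (psetU B C) = psetU (psetU A B) C.
  by apply: pset_ext => p; rewrite /psetU; tauto.
apply: tcong_trans (tcong_psetU (tcong_refl A) (tcong_sym BC)) _.
by rewrite ABC; apply: tcong_trans (tcong_psetU AB (tcong_refl C)) BC.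
Qed.

Lemma tleq_anti A B : tleq A B -> tleq B A -> tcong A B.
Proof.
move=> AB BA; apply: tcong_trans (tcong_sym BA) _.
by rewrite (_ : psetU B A = psetU A B) //; apply: pset_ext => p; rewrite /psetU; tauto.
Qed.

Lemma pbigcup_tleq I (F : I -> pset TX) B : (forall i, tleq (F i) B) -> tleq (pbigcup F) B.
Proof.
move=> FB; rewrite /tleq.
pose G (o : option I) := if o is Some i then psetU (F i) B else B.
have -> : psetU (pbigcup F) B = pbigcup G.
  apply: pset_ext => p; split.
  - by case=> [[i ?]|?]; [exists (Some i); left|exists None].
  - by case=> -[i [?|?]|?]; [left; exists i|right|right].
have const_B : pbigcup (fun _ : option I => B) = B.
  by apply: pset_ext => p; split => [[]|Bp] //; exists None.
rewrite -[X in tcong _ X]const_B.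
by apply: tcong_pbigcup => -[i|]; [apply: FB|apply: tcong_refl].
Qed.

Lemma points_tleq A B : (forall p, A p -> tleq (sing p) B) -> tleq A B.
Proof.
move=> AB; have -> : A = pbigcup (fun q : {p | A p} => sing (sval q)).
  by apply: pset_ext => p; split => [Ap|[[q Aq] /= ->] //]; exists (exist _ p Ap).
by apply: pbigcup_tleq => -[q Aq]; apply: AB.
Qed.

Lemma tcong_qunion Xs y : tcong (sing (qunion Xs, y)) (fun p => Xs p.1 /\ p.2 = y).
Proof. by apply: tcong_gen; left; exists Xs, y. Qed.

Lemma tcong_th_jn x Ys : tcong (sing (x, th_jn H Ys)) (fun p => p.1 = x /\ Ys p.2).
Proof. by apply: tcong_gen; right; left; exists x, Ys. Qed.

Lemma tcong_balance x a y : tcong (sing (qmul x (iset E a), y)) (sing (x, th_act H a y)).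
Proof. by apply: tcong_gen; right; right; exists x, a, y. Qed.

Lemma tcong_points_left x y :
  tcong (sing (x, y)) (fun p => exists2 s, x s & p = (sing s, y)).
Proof.
pose Xs X := exists2 s, x s & X = sing s.
have x_Xs : x = qunion Xs.
  apply: pset_ext => u; split => [xu|[_ [[s xs ->] ->]] //].
  by exists (sing u); split => //; exists u.
rewrite {1}x_Xs; apply: tcong_trans (tcong_qunion _ _) _.
suff -> : (fun p => Xs p.1 /\ p.2 = y) = (fun p => exists2 s, x s & p = (sing s, y)).
  exact: tcong_refl.
apply: pset_ext => -[X z] /=; split; first by case=> -[s xs ->] ->; exists s.
by case=> s xs [-> ->]; split => //; exists s.
Qed.

Lemma tleq_pairr x (y y' : ThCar vd) :
  (forall d, sval y d -> sval y' d) -> tleq (sing (x, y)) (sing (x, y')).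
Proof.
move=> yy'; have -> : y' = th_jn H (fun z => z = y \/ z = y').
  apply: th_ext => d /=; split => y'd.
  - by apply: (cq_refl H); exists y'; split => //; right.
  - by apply: (th_closed H) y'd => u [z [[->|->] zu]] //; apply: yy'.
apply: tleq_trans (tcong_tleq (tcong_sym (tcong_th_jn _ _))).
by apply: mem_tleq; split => //; left.
Qed.

Lemma tleq_pairl (x x' : pset (Subst L1)) y :
  (forall s, x s -> x' s) -> tleq (sing (x, y)) (sing (x', y)).
Proof.
move=> xx'; apply: tleq_trans (tcong_tleq (tcong_points_left x y)) _.
apply: tleq_trans _ (tcong_tleq (tcong_sym (tcong_points_left x' y))).
by apply: subset_tleq => _ [s xs ->]; exists s => //; apply: xx'.
Qed.

Definition tact (a : pset (Subst L1)) (A : pset TX) : pset TX :=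
  fun p => exists x y, A (x, y) /\ p = (qmul a x, y).

Lemma tact_sing a x y : tact a (sing (x, y)) = sing (qmul a x, y).
Proof.
apply: pset_ext => p; split; first by case=> _ [_ [[-> ->] ->]].
by move=> ->; exists x, y.
Qed.

Lemma tact_pbigcup a I (F : I -> pset TX) :
  tact a (pbigcup F) = pbigcup (fun i => tact a (F i)).
Proof.
apply: pset_ext => p; split.
- by case=> x [y [[i ?] ->]]; exists i, x, y.
- by case=> i [x [y [? ->]]]; exists x, y; split => //; exists i.
Qed.

Lemma tact_qunion a Xs y :
  tact a (sing (qunion Xs, y)) = sing (qunion (fun Z => exists2 x, Xs x & Z = qmul a x), y).
Proof.
rewrite tact_sing; congr (sing (_, _)); apply: pset_ext => u; split.
- case=> s [t [as_ [[X [XsX Xt]] ->]]].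
  by exists (qmul a X); split; [exists X|exists s, t].
- case=> _ [[X XsX ->] [s [t [as_ [Xt ->]]]]].
  by exists s, t; do !split => //; exists X.
Qed.

Lemma tact_tcong a A B : tcong A B -> tcong (tact a A) (tact a B).
Proof.
move=> AB; apply: (AB (fun A B => tcong (tact a A) (tact a B))).
  do ![split].
  - by move=> ?; apply: tcong_refl.
  - by move=> ? ?; apply: tcong_sym.
  - by move=> ? ? ?; apply: tcong_trans.
  - by move=> I F G FG; rewrite !tact_pbigcup; apply: tcong_pbigcup.
move=> _ _ [[Xs [y [-> ->]]]|[[x [Ys [-> ->]]]|[x [b [y [-> ->]]]]]].
- rewrite -[fun p => p = _]/(sing _) tact_qunion.
  apply: tcong_trans (tcong_qunion _ _) _.
  suff -> : (fun p => (exists2 x, Xs x & p.1 = qmul a x) /\ p.2 = y) =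
            tact a (fun p => Xs p.1 /\ p.2 = y) by exact: tcong_refl.
  apply: pset_ext => -[z w] /=; split; first by case=> -[x Xsx ->] ->; exists x, y.
  by case=> x [y1 [[/= Xsx ->] [-> ->]]]; split => //; exists x.
- rewrite -[fun p => p = _]/(sing _) tact_sing.
  apply: tcong_trans (tcong_th_jn _ _) _.
  suff -> : (fun p => p.1 = qmul a x /\ Ys p.2) = tact a (fun p => p.1 = x /\ Ys p.2)
    by exact: tcong_refl.
  apply: pset_ext => -[z w] /=; split; first by case=> -> Ysw; exists x, w.
  by case=> x1 [w1 [[/= -> Ysw] [-> ->]]].
- by rewrite -!/(sing _) !tact_sing qmulA; apply: tcong_balance.
Qed.

Lemma tact_psetU a A B : tact a (psetU A B) = psetU (tact a A) (tact a B).
Proof.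
rewrite !psetU_pbigcup tact_pbigcup; congr pbigcup.
by apply: functional_extensionality => -[].
Qed.

Lemma tact_tleq a A B : tleq A B -> tleq (tact a A) (tact a B).
Proof. by move=> AB; rewrite /tleq -tact_psetU; apply: tact_tcong. Qed.

Definition inst (s : Subst L1) (d : Dom k L) : Dom k L1 := dsubst s (dmap (embF E) d).

Definition pure (s : Subst L1) (d : Dom k L) : pset TX := sing (sing s, principal H d).

Lemma inst_scomp s t d : inst (scomp s t) d = dsubst s (inst t d).
Proof. exact: dsubst_scomp. Qed.

Lemma inst_dgeneric (x : Dom k L1) : inst (subst_of_seq (dforms x)) (dgeneric L x) = x.
Proof. by rewrite /inst dmap_dgeneric ?dsubst_dgeneric. Qed.

Lemma dgeneric_inst s d : dgeneric L (inst s d) = dgeneric L d.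
Proof. by rewrite /inst dsubst_dmap !dgeneric_dmap. Qed.

Lemma dforms_inst s d : dforms (inst s d) = map (subst s \o embF E) (dforms d).
Proof. by rewrite /inst dsubst_dmap !dforms_dmap map_comp. Qed.

Lemma pure_balance s t d : tcong (pure (scomp s (iSub E t)) d) (pure s (dsubst t d)).
Proof. by rewrite /pure -th_act_principal -qmul_sing -iset_sing; apply: tcong_balance. Qed.

(* [a] and [b] factor through the interleaving [rho] as [rho \o i ra] and
   [rho \o i rb], and [ra], [rb] agree below [n]. *)
Lemma pure_agree n (d : Dom k L) (a b : Subst L1) :
  vars_below n d -> (forall v, v < n -> a v = b v) -> tcong (pure a d) (pure b d).
Proof.
move=> d_n ab.
pose rho : Subst L1 := fun w => if odd w then b w./2 else a w./2.
pose ra : Subst L := fun v => Var v.*2.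
pose rb : Subst L := fun v => if v < n then Var v.*2 else Var v.*2.+1.
have ra_rb : dsubst ra d = dsubst rb d by apply: d_n => v vn; rewrite /rb vn.
have rho_ra : scomp rho (iSub E ra) = a.
  by apply: functional_extensionality => v; rewrite /scomp /= /rho odd_double doubleK.
have rho_rb : scomp rho (iSub E rb) = b.
  apply: functional_extensionality => v; rewrite /scomp /iSub /rb.
  case: ifP => vn /=; rewrite /rho.
  - by rewrite odd_double doubleK ab.
  - by rewrite oddS odd_double -[v.*2.+1]/(true + v.*2) half_bit_double.
rewrite -rho_ra -rho_rb.
apply: tcong_trans (pure_balance _ _ _) _; rewrite ra_rb.
exact: tcong_sym (pure_balance _ _ _).
Qed.

Lemma pure_inst s d s' d' : inst s d = inst s' d' -> tcong (pure s d) (pure s' d').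
Proof.
move=> ss'.
have gen_dd' : dgeneric L d' = dgeneric L d.
  by rewrite -(dgeneric_inst s' d') -ss' dgeneric_inst.
have forms_ss' : map (subst s \o embF E) (dforms d) = map (subst s' \o embF E) (dforms d').
  by rewrite -!dforms_inst ss'.
have size_dd' : size (dforms d') = size (dforms d).
  by move/(congr1 size): forms_ss'; rewrite !size_map.
rewrite -(dsubst_dgeneric d) -(dsubst_dgeneric d') gen_dd'.
apply: tcong_trans (tcong_sym (pure_balance _ _ _)) _.
apply: tcong_trans _ (pure_balance _ _ _).
apply: (pure_agree (@dgeneric_vars_below _ _ L d)) => v vn.
move/(congr1 (nth (embF E (Var 0)) ^~ v)): forms_ss'.
by rewrite /scomp /iSub /subst_of_seq !(nth_map (Var 0)) ?size_dd'.
Qed.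

Lemma pure_inst_dsubst t x s d :
  inst s d = dsubst t x ->
  tcong (pure s d) (tact (sing t) (pure (subst_of_seq (dforms x)) (dgeneric L x))).
Proof.
move=> sdx; rewrite /pure tact_sing qmul_sing; apply: pure_inst.
by rewrite inst_scomp inst_dgeneric.
Qed.

Definition pureset (P : pset (Dom k L1)) : pset TX :=
  fun p => exists s d, P (inst s d) /\ p = (sing s, principal H d).

Lemma pure_tleq_pureset P s d : P (inst s d) -> tleq (pure s d) (pureset P).
Proof. by move=> Psd; apply: mem_tleq; exists s, d. Qed.

Lemma pureset_sact a P : tcong (pureset (sact a P)) (tact a (pureset P)).
Proof.
apply: tleq_anti.
- apply: points_tleq => _ [s [d [[t [x [at_ [Px sdx]]]] ->]]].
  apply: tleq_trans (tcong_tleq (pure_inst_dsubst sdx)) _.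
  set s0 := subst_of_seq _; set d0 := dgeneric L x; rewrite /pure tact_sing.
  apply: (@tleq_trans _ (sing (qmul a (sing s0), principal H d0))).
    by apply: tleq_pairl => _ [_ [_ [-> [-> ->]]]]; exists t, s0.
  apply: mem_tleq; exists (sing s0), (principal H d0); split => //.
  by exists s0, d0; rewrite inst_dgeneric.
- apply: points_tleq => _ [x [y [[s [d [Psd [-> ->]]]] ->]]].
  apply: tleq_trans (tcong_tleq (tcong_points_left _ _)) (subset_tleq _).
  move=> _ [_ [t [_ [at_ [-> ->]]]] ->]; exists (scomp t s), d; split => //.
  by exists t, (inst s d); split => //; split => //; rewrite inst_scomp.
Qed.

Definition tens_vd (P : pset (Dom k L1)) (x : Dom k L1) : Prop :=
  forall s d, inst s d = x -> tleq (pure s d) (pureset P).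

Lemma tens_vd_conseq : conseq tens_vd.
Proof.
split.
- by move=> P x Px s d sdx; apply: pure_tleq_pureset; rewrite sdx.
- move=> P Q x PQ Px s d sdx; apply: tleq_trans (Px s d sdx) (subset_tleq _).
  by move=> _ [s' [d' [Psd' ->]]]; exists s', d'; split => //; apply: PQ.
- move=> P Q x QP Qx s d sdx; apply: tleq_trans (Qx s d sdx) _.
  by apply: points_tleq => _ [s' [d' [Qsd' ->]]]; apply: (QP _ Qsd').
- move=> t P x Px s d sdx.
  apply: tleq_trans (tcong_tleq (pure_inst_dsubst sdx)) _.
  apply: tleq_trans (tact_tleq _ (Px _ _ (inst_dgeneric x))) _.
  exact: tcong_tleq (tcong_sym (pureset_sact _ _)).
Qed.

Lemma pureset_tens_vd Q : tcong (pureset (tens_vd Q)) (pureset Q).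
Proof.
apply: tleq_anti.
- by apply: points_tleq => _ [s [d [Qsd ->]]]; apply: Qsd.
- apply: subset_tleq => _ [s [d [Qsd ->]]]; exists s, d; split => //.
  exact: (cq_refl tens_vd_conseq).
Qed.

Lemma pure_tleq_pair x (y : ThCar vd) s d :
  x s -> sval y d -> tleq (pure s d) (sing (x, y)).
Proof.
move=> xs yd; apply: tleq_trans (tleq_pairr _ (principal_sub yd)) _.
by apply: tleq_pairl => _ ->.
Qed.

Lemma tcls_tcong A B : tcong A B -> tcls E A = tcls E B.
Proof.
move=> AB; apply: sval_inj; apply: pset_ext => X /=; split.
- exact: tcong_trans (tcong_sym AB).
- exact: tcong_trans AB.
Qed.

Lemma tcls_surj (C : TCar E H) : exists A, C = tcls E A.
Proof. by case: C => c [A cA]; exists A; apply: sval_inj. Qed.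

Definition below_class (C : TCar E H) (x : Dom k L1) : Prop :=
  forall s d, inst s d = x -> exists2 A, sval C A & tleq (pure s d) A.

Lemma below_tcls A x :
  below_class (tcls E A) x <-> forall s d, inst s d = x -> tleq (pure s d) A.
Proof.
split=> Ax s d sdx; last by exists A; [apply: tcong_refl|apply: Ax].
case: (Ax s d sdx) => A' /= AA' sdA'.
exact: tleq_trans sdA' (tcong_tleq (tcong_sym AA')).
Qed.

Lemma below_class_theory C : theory tens_vd (below_class C).
Proof.
case: (tcls_surj C) => A ->; apply: pset_ext => x; rewrite /gamma; split => Ax.
- apply/below_tcls => s d sdx; apply: tleq_trans (Ax s d sdx) _.
  by apply: points_tleq => _ [s' [d' [/below_tcls sdA ->]]]; apply: sdA.
- exact: (cq_refl tens_vd_conseq).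
Qed.

Definition class_of_th (T : ThCar tens_vd) : TCar E H := tcls E (pureset (sval T)).

Definition th_of_class (C : TCar E H) : ThCar tens_vd :=
  exist _ (below_class C) (below_class_theory C).

Lemma class_of_thK : cancel class_of_th th_of_class.
Proof.
case=> P thP; apply: sval_inj; apply: pset_ext => x /=.
by rewrite below_tcls -[in X in _ <-> X]thP.
Qed.

Lemma th_of_classK : cancel th_of_class class_of_th.
Proof.
move=> C; case: (tcls_surj C) => A ->; apply: tcls_tcong; apply: tleq_anti.
  by apply: points_tleq => _ [s [d [/below_tcls sdA ->]]]; apply: sdA.
apply: points_tleq => -[x y] Axy.
apply: tleq_trans (tcong_tleq (tcong_points_left x y)) _.
apply: points_tleq => _ [s xs ->].
rewrite {1}(th_jn_principal H y); apply: tleq_trans (tcong_tleq (tcong_th_jn _ _)) _.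
apply: points_tleq => -[_ _] [/= -> [d yd ->]]; apply: pure_tleq_pureset.
apply/below_tcls => s' d' sd'.
apply: tleq_trans (tcong_tleq (pure_inst sd')) _.
exact: tleq_trans (pure_tleq_pair xs yd) (mem_tleq Axy).
Qed.

Lemma class_of_th_jn (S : pset (ThCar tens_vd)) :
  class_of_th (th_jn tens_vd_conseq S) =
  t_jn (fun C => exists T, S T /\ C = class_of_th T).
Proof.
apply: tcls_tcong; apply: tcong_trans (pureset_tens_vd _) _; apply: tleq_anti.
- apply: subset_tleq => _ [s [d [[T [ST Tsd]] ->]]].
  exists (class_of_th T), (pureset (sval T)); split; first by exists T.
  by split; [apply: tcong_refl|exists s, d].
- apply: points_tleq => p [C [A [[T [ST ->]] [/= TA Ap]]]].
  apply: tleq_trans (mem_tleq Ap) _; apply: tleq_trans (tcong_tleq (tcong_sym TA)) _.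
  by apply: subset_tleq => _ [s [d [Tsd ->]]]; exists s, d; split => //; exists T.
Qed.

Lemma t_act_tcls a A : t_act a (tcls E A) = tcls E (tact a A).
Proof.
apply: tcls_tcong; apply: tleq_anti.
- apply: points_tleq => _ [A' [x [y [/= AA' [A'xy ->]]]]].
  apply: tleq_trans (mem_tleq (A := tact a A') _) _; first by exists x, y.
  exact: tcong_tleq (tact_tcong a (tcong_sym AA')).
- apply: subset_tleq => _ [x [y [Axy ->]]].
  by exists A, x, y; split => //; apply: tcong_refl.
Qed.

Lemma class_of_th_act a (T : ThCar tens_vd) :
  class_of_th (th_act tens_vd_conseq a T) = t_act a (class_of_th T).
Proof.
rewrite t_act_tcls; apply: tcls_tcong.
exact: tcong_trans (pureset_tens_vd _) (pureset_sact _ _).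
Qed.

End ScalarExtension.

Theorem proposition3p2 (L L1 : Lang) (E : expansion L L1) (k : DomKind)
  (vd : pset (Dom k L) -> Dom k L -> Prop) (H : conseq vd) :
  exists (vd1 : pset (Dom k L1) -> Dom k L1 -> Prop) (H1 : conseq vd1),
    module_iso (ThMod H1) (TensorMod E H).
Proof.
exists (tens_vd E H), (tens_vd_conseq E H), (class_of_th (H := H)); split; last split.
- by exists (th_of_class (H := H)); [apply: class_of_thK|apply: th_of_classK].
- exact: class_of_th_jn.
- exact: class_of_th_act.
Qed.
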